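(* Let $P,Q\in\mathbb R[X]$ be real polynomials such that all (complex) roots of $P$ are real (respectively, all roots of $P$ lie in $\mathbb R_{\ge0}$). If there exists $c>0$ such that $|Q(t)|\le c|P(t)|$ for all $t\in\mathbb R$ (respectively, for all $t\in\mathbb R_{\ge0}$), then $Q=\kappa P$ for some $\kappa\in\mathbb R$. Moreover, if $\deg Q<\deg P$, then $Q=0$. *)

From mathcomp Require Import all_boot all_order all_algebra.
From mathcomp Require Import reals complex.
Set Implicit Arguments. Unset Strict Implicit. Unset Printing Implicit Defensive.
Import Order.TTheory GRing.Theory Num.Theory.
Local Open Scope ring_scope.

Definition all_roots_real (R : realType) (P : {poly R}) : Prop :=
  forall z : R[i], root (map_poly (real_complex R) P) z -> Im z = 0.

Definition all_roots_nonneg (R : realType) (P : {poly R}) : Prop :=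
  forall z : R[i], root (map_poly (real_complex R) P) z -> Im z = 0 /\ 0 <= Re z.

From mathcomp Require Import all_boot all_order all_algebra.
From mathcomp Require Import reals complex polyrcf.
From mathcomp Require Import lra.
Set Implicit Arguments. Unset Strict Implicit. Unset Printing Implicit Defensive.
Import Order.TTheory GRing.Theory Num.Theory.
Local Open Scope ring_scope.

(* If P vanishes at a point a of the domain (R or [0, +oo)), domination
   forces Q(a) = 0, so X - a divides both P and Q; the quotients are still
   dominated, away from a because |t - a| cancels, and at a by continuity from
   the right.  As P splits with all its roots in the domain, induction gives
   Q = S P.  Then S is bounded by c wherever P does not vanish, in particular
   at every large t, so S is constant. *)

Section RealRooted.
Variable R : rcfType.
Implicit Types (D : pred R) (P Q : {poly R}).

Definition real_rooted_in D P :=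
  forall z : R[i], root (map_poly (real_complex R) P) z -> exists2 a, D a & z = a%:C%C.

Lemma real_rooted_in_neq0 D P : real_rooted_in D P -> P != 0.
Proof.
apply: contraPneq => -> roots0.
have [|a _ /(congr1 (@complex.Im R)) /= /eqP] := roots0 (Complex 0 1).
  by rewrite map_poly0 root0.
by rewrite oner_eq0.
Qed.

Lemma real_rooted_in_mulr D P Q : real_rooted_in D (P * Q) -> real_rooted_in D P.
Proof. by move=> PQ z Pz; apply: PQ; rewrite rmorphM rootM Pz. Qed.

Lemma real_rooted_in_root D P :
  real_rooted_in D P -> size P != 1 -> exists2 a, D a & root P a.
Proof.
move=> rootsP; rewrite -(size_map_poly (real_complex R)) => /closed_rootP[z Pz].
have [a Da za] := rootsP z Pz.
by exists a; move: Pz; rewrite // za fmorph_root.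
Qed.

End RealRooted.

Section RightLimits.
Variable R : rcfType.
Implicit Types (p P Q : {poly R}) (a c : R).

Lemma horner_ge0_right p a : (forall y, a < y -> 0 <= p.[y]) -> 0 <= p.[a].
Proof.
move=> p_ge0; rewrite leNgt; apply/negP => pa_lt0.
have [d d_gt0 near_a] := poly_cont a p (ltac:(lra) : 0 < - p.[a]).
have ay : a < a + d / 2 by rewrite ltrDl divr_gt0.
have : `|p.[a + d / 2] - p.[a]| < - p.[a].
  by apply: near_a; rewrite addrAC subrr add0r gtr0_norm ?divr_gt0 //; lra.
by rewrite ltr_norml => /andP[_]; have := p_ge0 _ ay; lra.
Qed.

Lemma ler_norm_horner_right P Q c a : 0 <= c ->
  (forall y, a < y -> `|Q.[y]| <= c * `|P.[y]|) -> `|Q.[a]| <= c * `|P.[a]|.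
Proof.
move=> c_ge0 PQ_right.
(* Squaring turns the bound into the sign of a single polynomial. *)
have sqrE t : (`|Q.[t]| <= c * `|P.[t]|) = (0 <= ((c *: P) ^+ 2 - Q ^+ 2).[t]).
  rewrite -{1}(ger0_norm c_ge0) -normrM -ler_sqr ?nnegrE //.
  by rewrite !real_normK ?num_real // !hornerE subr_ge0.
by rewrite sqrE; apply: horner_ge0_right => y /PQ_right; rewrite sqrE.
Qed.

Lemma norm_horner_lim_infty P m :
  (1 < size P)%N -> exists n, forall x, n <= x -> m <= `|P.[x]|.
Proof.
wlog lcP_gt0 : P / 0 < lead_coef P => [gen sP|sP].
  have : lead_coef P != 0 by rewrite lead_coef_eq0 -size_poly_gt0 (ltn_trans _ sP).
  case: ltrgtP => // [lcP_lt0|lcP_gt0] _; last exact: gen.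
  have [n Hn] : exists n, forall x, n <= x -> m <= `|(- P).[x]|.
    by apply: gen; rewrite ?lead_coefN ?oppr_gt0 ?size_polyN.
  by exists n => x /Hn; rewrite hornerN normrN.
have [n Hn] := poly_lim_infty m lcP_gt0 sP.
by exists n => x /Hn /le_trans; apply; apply: ler_norm.
Qed.

End RightLimits.

Lemma scale_poly_size_lt_eq0 (R : idomainType) (k : R) (P : {poly R}) :
  (size (k *: P) < size P)%N -> k *: P = 0.
Proof.
have [->|k_neq0] := eqVneq k 0; first by rewrite scale0r.
by rewrite size_scale // ltnn.
Qed.

Section Domination.
Variables (R : rcfType) (D : pred R) (c : R).
Hypothesis D_up : forall x y, x <= y -> D x -> D y.
Implicit Types (P Q S : {poly R}) (a : R).

Definition dominated P Q := forall t, D t -> `|Q.[t]| <= c * `|P.[t]|.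

Lemma root_dominated P Q a : dominated P Q -> D a -> root P a -> root Q a.
Proof.
move=> PQ Da /rootP Pa0; have := PQ a Da.
by rewrite Pa0 normr0 mulr0 normr_le0.
Qed.

Lemma dominated_XsubC P Q a : 0 <= c -> D a ->
  dominated (P * ('X - a%:P)) (Q * ('X - a%:P)) -> dominated P Q.
Proof.
move=> c_ge0 Da PQ.
have off_a t : D t -> t != a -> `|Q.[t]| <= c * `|P.[t]|.
  move=> Dt ta; have := PQ t Dt.
  by rewrite !hornerM !normrM hornerXsubC mulrA ler_pM2r // normr_gt0 subr_eq0.
move=> t Dt; have [->|] := eqVneq t a; last exact: off_a.
apply: ler_norm_horner_right => // y ay.
by apply: off_a; [apply: D_up Da; apply: ltW | rewrite gt_eqF].
Qed.

Lemma dominated_dvdp P Q : 0 <= c -> real_rooted_in D P -> dominated P Q -> P %| Q.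
Proof.
move=> c_ge0; move: {2}(size P) (leqnn (size P)) => n.
elim: n P Q => [|n IHn] P Q sP rootsP PQ.
  by move: (real_rooted_in_neq0 rootsP); rewrite -size_poly_eq0 -leqn0 sP.
have [/eqP sP1|sP_neq1] := eqVneq (size P) 1.
  by rewrite (eqp_dvdl _ (_ : P %= 1)) ?dvd1p // -size_poly_eq1.
have [a Da Pa] := real_rooted_in_root rootsP sP_neq1.
have [P1 EP] := factor_theorem _ _ Pa.
have [Q1 EQ] := factor_theorem _ _ (root_dominated PQ Da Pa).
rewrite {}EP {}EQ in sP rootsP PQ *; rewrite dvdp_mul2r ?polyXsubC_eq0 //.
have P1_neq0 : P1 != 0 by apply: real_rooted_in_neq0 (real_rooted_in_mulr rootsP).
apply: IHn.
- by move: sP; rewrite size_Mmonic ?monicXsubC // size_XsubC addn2.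
- exact: real_rooted_in_mulr rootsP.
- exact: dominated_XsubC PQ.
Qed.

Hypothesis D0 : D 0.

Lemma dominated_mul_size S P : P != 0 -> dominated P (S * P) -> (size S <= 1)%N.
Proof.
move=> P_neq0 PSP; rewrite leqNgt; apply/negP => sS.
have [n Sn] := norm_horner_lim_infty (c + 1) sS.
set x := Num.max n (Num.max (cauchy_bound P) 0).
have Dx : D x by apply: D_up D0; rewrite !le_max lexx !orbT.
have Px_neq0 : P.[x] != 0.
  by apply: ge_cauchy_bound; rewrite // in_itv /= andbT !le_max lexx !orbT.
have := PSP x Dx; rewrite hornerM normrM ler_pM2r ?normr_gt0 //.
by have := Sn x; rewrite le_max lexx => /(_ isT); lra.
Qed.

Lemma dominated_eq_scale P Q : 0 <= c -> real_rooted_in D P -> dominated P Q ->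
  exists k, Q = k *: P.
Proof.
move=> c_ge0 rootsP PQ; have P_neq0 := real_rooted_in_neq0 rootsP.
set S := Q %/ P; have QE : Q = S * P by rewrite divpK // dominated_dvdp.
have /size1_polyC SE : (size S <= 1)%N by apply: (dominated_mul_size P_neq0); rewrite -QE.
by exists S`_0; rewrite QE {1}SE mul_polyC.
Qed.

Lemma dominated_eq_scale_size P Q : 0 <= c -> real_rooted_in D P -> dominated P Q ->
  (exists k, Q = k *: P) /\ ((size Q < size P)%N -> Q = 0).
Proof.
move=> c_ge0 rootsP /(dominated_eq_scale c_ge0 rootsP)[k ->].
by split; [exists k | apply: scale_poly_size_lt_eq0].
Qed.

End Domination.

Lemma complex_Im_eq0 (R : rcfType) (z : R[i]) : 'Im z = 0 -> z = (complex.Re z)%:C%C.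
Proof. by case: z => x y; rewrite -complexIm => /(congr1 (@complex.Re R)) /= ->. Qed.

Lemma all_roots_real_rooted_in (R : realType) (P : {poly R}) :
  all_roots_real P -> real_rooted_in predT P.
Proof. by move=> rootsP z /rootsP /complex_Im_eq0 ->; exists (complex.Re z). Qed.

Lemma all_roots_nonneg_rooted_in (R : realType) (P : {poly R}) :
  all_roots_nonneg P -> real_rooted_in (fun t => 0 <= t) P.
Proof.
move=> rootsP z /rootsP[/complex_Im_eq0 -> Re_ge0]; exists (complex.Re z) => //.
by move: Re_ge0; rewrite -complexRe ler0c.
Qed.

Theorem lemma8 (R : realType) :
  (forall P Q : {poly R},
     all_roots_real P ->
     (exists2 c : R, 0 < c & forall t : R, `|Q.[t]| <= c * `|P.[t]|) ->
     (exists kappa : R, Q = kappa *: P) /\ ((size Q < size P)%N -> Q = 0))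
  /\
  (forall P Q : {poly R},
     all_roots_nonneg P ->
     (exists2 c : R, 0 < c & forall t : R, 0 <= t -> `|Q.[t]| <= c * `|P.[t]|) ->
     (exists kappa : R, Q = kappa *: P) /\ ((size Q < size P)%N -> Q = 0)).
Proof.
split=> P Q rootsP [c /ltW c_ge0 PQ].
  exact: (@dominated_eq_scale_size _ predT c (fun _ _ _ _ => isT) isT P Q c_ge0
           (all_roots_real_rooted_in rootsP) (fun t _ => PQ t)).
have nonneg_up (x y : R) : x <= y -> 0 <= x -> 0 <= y by move=> /[swap]; apply: le_trans.
exact: (dominated_eq_scale_size nonneg_up (lexx 0) c_ge0
          (all_roots_nonneg_rooted_in rootsP) PQ).
Qed.
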